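(* If $G$ is a trigraph with $\operatorname{stww}(G)>\Delta(G)^2$, then $\operatorname{stww}(G)=\operatorname{tww}(G)$.
   Context: A trigraph is a finite simple graph whose edges are each colored red or black; a graph is viewed as a trigraph with all edges black. $\Delta(G)$ denotes the maximum degree of the underlying graph (edges of both colors counted). The red degree of a vertex is the number of red edges incident to it. For a partition $\mathcal{P}$ of $V(G)$, the quotient trigraph $G/\mathcal{P}$ has vertex set $\mathcal{P}$; two distinct parts $U,W$ are joined by a black edge if every pair $\{u,w\}$ with $u\in U,w\in W$ is a black edge of $G$, are non-adjacent if no such pair is an edge, and are joined by a red edge otherwise. A contraction sequence of an $n$-vertex trigraph $G$ is a sequence $\mathcal{P}_n,\dots,\mathcal{P}_1$ of partitions of $V(G)$ where $\mathcal{P}_n$ is the partition into singletons and each $\mathcal{P}_i$ arises from $\mathcal{P}_{i+1}$ by merging two parts; its width is the maximum red degree over all $G/\mathcal{P}_i$, and $\operatorname{tww}(G)$ is the minimum width of a contraction sequence. The sparse twin-width is $\operatorname{stww}(G)\coloneqq\operatorname{tww}(G_{\mathrm{red}})$, where $G_{\mathrm{red}}$ is obtained from $G$ by coloring all edges red. *)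

From mathcomp Require Import all_boot.
Set Implicit Arguments. Unset Strict Implicit. Unset Printing Implicit Defensive.

Definition is_trigraph (T : finType) (b r : rel T) : Prop :=
  [/\ symmetric b, symmetric r, irreflexive b, irreflexive r &
      forall x y, ~~ (b x y && r x y)].

Section TwinWidth.
Variables (T : finType) (b r : rel T).

Definition adj (x y : T) : bool := b x y || r x y.

Definition maxdeg : nat := \max_(x : T) #|[set y | adj x y]|.

(* parts U, W of a partition are joined by a red edge in G/P *)
Definition qred (U W : {set T}) : bool :=
  ~~ [forall u in U, forall w in W, b u w] &&
  [exists u in U, exists w in W, adj u w].

Definition reddeg (P : {set {set T}}) (U : {set T}) : nat :=
  #|[set W in P | (W != U) && qred U W]|.

Definition pwidth (P : {set {set T}}) : nat := \max_(U in P) reddeg P U.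

Definition singletons : {set {set T}} := [set [set x] | x : T].

Definition merge_step (P Q : {set {set T}}) : bool :=
  [exists U in P, exists W in P,
     (U != W) && (Q == (P :\ U :\ W) :|: [set U :|: W])].

(* A contraction sequence P_n, ..., P_1 (n = #|T|) is stored as the tuple
   s = [P_n; P_{n-1}; ...; P_1]. *)
Definition is_contraction_seq (s : #|T|.-tuple {set {set T}}) : bool :=
  [forall i : 'I_#|T|,
     if i == 0 :> nat then tnth s i == singletons
     else merge_step (nth set0 s i.-1) (tnth s i)].

Definition seq_width (s : #|T|.-tuple {set {set T}}) : nat :=
  \max_(i < #|T|) pwidth (tnth s i).

(* twin-width: minimum width over all contraction sequences.  The neutral
   element #|T| is a harmless upper bound (red degrees are < #|T|). *)
Definition tww : nat :=
  \big[minn/#|T|]_(s : #|T|.-tuple {set {set T}} | is_contraction_seq s)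
     seq_width s.

End TwinWidth.

Definition stww (T : finType) (b r : rel T) : nat :=
  tww (fun _ _ => false) (adj b r).

From mathcomp Require Import all_boot.

Set Implicit Arguments.
Unset Strict Implicit.
Unset Printing Implicit Defensive.

(* Fix a partition P of the vertices and a part U.  If |U| <= Delta, the red
   neighbours of U in G_red/P are parts meeting the neighbourhood N(U), a set
   of at most Delta^2 vertices, and distinct parts are disjoint.  If |U| > Delta,
   no vertex is adjacent to all of U, so U is black-complete to no part: every
   red edge at U in G_red/P is already red in G/P.  Hence every contraction
   sequence of G of width w has width at most max(w, Delta^2) on G_red, i.e.
   stww <= max(tww, Delta^2); and tww <= stww because recolouring edges red
   never turns a red edge of a quotient into a black one or a non-edge. *)

Section Partitions.
Variable T : finType.
Implicit Types (P Q : {set {set T}}) (A N : {set T}).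

Lemma singletons_trivIset : trivIset (singletons T).
Proof.
apply/trivIsetP => _ _ /imsetP[x _ ->] /imsetP[y _ ->] xy.
by rewrite disjoints1 inE; apply: contra xy => /eqP->.
Qed.

Lemma merge_step_trivIset P Q : trivIset P -> merge_step P Q -> trivIset Q.
Proof.
move=> /trivIsetP tP /existsP[U /andP[UP /existsP[W /andP[WP /andP[UW /eqP->]]]]].
have disj_UW A : A \in P -> A != U -> A != W -> [disjoint A & U :|: W].
  by move=> AP AU AW; rewrite -setI_eq0 setIUr setU_eq0 !setI_eq0 !tP.
apply/trivIsetP => A B; rewrite !inE.
move=> /orP[/and3P[AW AU AP] | /eqP->] /orP[/and3P[BW BU BP] | /eqP->] AB.
- exact: tP.
- exact: disj_UW.
- by rewrite disjoint_sym disj_UW.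
- by rewrite eqxx in AB.
Qed.

Lemma contraction_seq_trivIset (s : #|T|.-tuple {set {set T}}) :
  is_contraction_seq s -> forall i, trivIset (tnth s i).
Proof.
move=> /forallP cs.
suff triv_nth k : k < #|T| -> trivIset (nth set0 s k).
  by move=> i; rewrite (tnth_nth set0) triv_nth.
elim: k => [|k IHk] lt_k; have := cs (Ordinal lt_k); rewrite /= (tnth_nth set0).
  by move=> /eqP->; apply: singletons_trivIset.
by move=> /merge_step_trivIset; apply; apply/IHk/ltnW.
Qed.

Lemma card_parts_meeting_le P N :
  trivIset P -> #|[set W in P | ~~ [disjoint W & N]]| <= #|N|.
Proof.
move=> /trivIsetP tP; have [->|[x0 _]] := set_0Vmem N.
  rewrite cards0 leqn0 cards_eq0; apply/eqP/setP => W.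
  by rewrite !inE -setI_eq0 setI0 eqxx andbF.
set Q := [set W in P | _]; pose f W := odflt x0 [pick y in W :&: N].
have f_in W : W \in Q -> f W \in W :&: N.
  rewrite inE => /andP[_]; rewrite -setI_eq0 => /set0Pn[y yWN].
  by rewrite /f; case: pickP => [z //|/(_ y)]; rewrite yWN.
have f_inj : {in Q &, injective f}.
  move=> W1 W2 W1Q W2Q eqf; apply: contraTeq isT => W12.
  have /setIP[fW1 _] := f_in _ W1Q; have /setIP[fW2 _] := f_in _ W2Q.
  move: W1Q W2Q; rewrite !inE => /andP[W1P _] /andP[W2P _].
  by move: fW2; rewrite -eqf (disjointFr (tP _ _ W1P W2P W12) fW1).
rewrite -(card_in_imset f_inj); apply: subset_leq_card.
by apply/subsetP => _ /imsetP[W WQ ->]; have /setIP[] := f_in _ WQ.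
Qed.

Lemma card_bigcup_le (I : finType) (A : {set I}) (F : I -> {set T}) :
  #|\bigcup_(i in A) F i| <= \sum_(i in A) #|F i|.
Proof.
elim/big_ind2: _ => [|X1 n1 X2 n2 le1 le2|//]; first by rewrite cards0.
by apply: leq_trans (leq_add le1 le2); apply: leq_card_setU.
Qed.

End Partitions.

Section WidthComparison.
Variables (T : finType) (b1 r1 b2 r2 : rel T) (c : nat).

Hypothesis reddeg_le : forall P U, trivIset P ->
  reddeg b1 r1 P U <= maxn (reddeg b2 r2 P U) c.

Lemma pwidth_le_maxn P : trivIset P -> pwidth b1 r1 P <= maxn (pwidth b2 r2 P) c.
Proof.
move=> tP; apply/bigmax_leqP => U UP.
apply: (leq_trans (reddeg_le U tP)).
by rewrite geq_max leq_maxr andbT leq_max (leq_bigmax_cond U).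
Qed.

Lemma tww_le_maxn : tww b1 r1 <= maxn (tww b2 r2) c.
Proof.
apply: (big_ind2 (fun x y => x <= maxn y c)) => [|x1 y1 x2 y2|s cs].
- exact: leq_maxl.
- by move=> le1 le2; rewrite maxn_minl leq_min !geq_min le1 le2 orbT.
- apply/bigmax_leqP => i _.
  apply: (leq_trans (pwidth_le_maxn (contraction_seq_trivIset cs i))).
  by rewrite geq_max leq_maxr andbT leq_max (leq_bigmax i).
Qed.

End WidthComparison.

Section AllRedComparison.
Variables (T : finType) (b r : rel T).

Implicit Types (P : {set {set T}}) (U W : {set T}).

Local Notation nored := (fun _ _ : T => false).
Local Notation nbhd x := [set y | adj b r x y].
Local Notation Delta := (maxdeg b r).

Lemma qred_allred U W :
  qred nored (adj b r) U W = [exists u in U, exists w in W, adj b r u w].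
Proof.
rewrite /qred; case: (boolP [exists u in U, _]) => [|_]; last by rewrite andbF.
move=> /existsP[u /andP[uU /existsP[w /andP[wW _]]]].
rewrite andbT; apply/negP.
by move=> /forallP/(_ u)/implyP/(_ uU)/forallP/(_ w)/implyP/(_ wW).
Qed.

Lemma qred_allredW U W : qred b r U W -> qred nored (adj b r) U W.
Proof. by rewrite qred_allred => /andP[]. Qed.

Lemma tww_le_stww : tww b r <= stww b r.
Proof.
rewrite -[stww b r]maxn0; apply: tww_le_maxn => P U _.
rewrite maxn0; apply/subset_leq_card/subsetP => W; rewrite !inE.
by case/and3P=> -> -> /qred_allredW.
Qed.

Lemma card_nbhd_le x : #|nbhd x| <= Delta.
Proof. exact: (@leq_bigmax _ (fun x => #|nbhd x|)). Qed.

Lemma card_nbhd_bigcup_le U : #|\bigcup_(u in U) nbhd u| <= #|U| * Delta.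
Proof.
apply: leq_trans (card_bigcup_le _ _) _.
by rewrite -sum_nat_const leq_sum // => u _; apply: card_nbhd_le.
Qed.

Lemma reddeg_allred_le_nbhd P U : trivIset P ->
  reddeg nored (adj b r) P U <= #|\bigcup_(u in U) nbhd u|.
Proof.
move=> tP; apply: leq_trans (card_parts_meeting_le _ tP).
apply/subset_leq_card/subsetP => W; rewrite !inE => /and3P[-> _].
rewrite qred_allred => /existsP[u /andP[uU /existsP[w /andP[wW uw]]]].
apply/negP => /disjointFr/(_ wW)/negbT/negP; apply.
by apply/bigcupP; exists u; rewrite ?inE.
Qed.

Hypothesis bsym : symmetric b.

Lemma card_black_complete_le U w : (forall u, u \in U -> b u w) -> #|U| <= Delta.
Proof.
move=> Ubw; apply: leq_trans (card_nbhd_le w).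
apply/subset_leq_card/subsetP => u uU.
by rewrite inE /adj bsym Ubw.
Qed.

Lemma qred_allred_qred U W :
  Delta < #|U| -> qred nored (adj b r) U W -> qred b r U W.
Proof.
rewrite qred_allred => bigU adjUW; rewrite /qred adjUW andbT.
apply: contraL bigU => /forallP Ub; rewrite -leqNgt.
have [u /andP[_ /existsP[w /andP[wW _]]]] := existsP adjUW.
apply: (@card_black_complete_le _ w) => v vU.
by move/implyP: (Ub v) => /(_ vU)/forallP/(_ w)/implyP/(_ wW).
Qed.

Lemma reddeg_allred_le P U : trivIset P ->
  reddeg nored (adj b r) P U <= maxn (reddeg b r P U) (Delta ^ 2).
Proof.
move=> tP; rewrite leq_max; case: (leqP #|U| Delta) => [smallU | bigU].
  apply/orP; right; apply: (leq_trans (reddeg_allred_le_nbhd U tP)).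
  apply: (leq_trans (card_nbhd_bigcup_le U)).
  by rewrite -mulnn leq_mul2r smallU orbT.
apply/orP; left; apply/subset_leq_card/subsetP => W; rewrite !inE.
by case/and3P=> -> -> /(qred_allred_qred bigU).
Qed.

Lemma stww_le_maxn : stww b r <= maxn (tww b r) (Delta ^ 2).
Proof. by apply: tww_le_maxn => P U; apply: reddeg_allred_le. Qed.

End AllRedComparison.

Theorem mainTheorem10 (T : finType) (b r : rel T) :
  is_trigraph b r ->
  maxdeg b r ^ 2 < stww b r ->
  stww b r = tww b r.
Proof.
move=> [bsym _ _ _ _] Delta2_lt.
apply/eqP; rewrite eqn_leq tww_le_stww andbT.
by have := stww_le_maxn r bsym; rewrite leq_max (leqNgt _ (_ ^ 2)) Delta2_lt orbF.
Qed.
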